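(* Let $n\ge 2$ and let $q\in\mathbb{C}$, $q\neq 0,\pm1$, not a root of unity. Then the assignment $$\phi(I_{i+1,i})=\tilde I_{i+1,i}\otimes 1+k_i\otimes I_{i+1,i},\qquad i=1,\dots,n-1,$$ extends to a unital algebra homomorphism $\phi:U'_q(\mathrm{so}_n)\to U_q(\mathrm{sl}_n)\otimes U'_q(\mathrm{so}_n)$ which makes $U'_q(\mathrm{so}_n)$ a (left) $U_q(\mathrm{sl}_n)$-comodule algebra, i.e. $(\Delta\otimes\mathrm{id})\circ\phi=(\mathrm{id}\otimes\phi)\circ\phi$ and $(\varepsilon\otimes\mathrm{id})\circ\phi=\mathrm{id}$. Moreover, if $\iota:U'_q(\mathrm{so}_n)\to U_q(\mathrm{sl}_n)$ denotes the algebra homomorphism $I_{i+1,i}\mapsto \tilde I_{i+1,i}$, then $(\mathrm{id}\otimes\iota)\circ\phi=\Delta\circ\iota$, i.e. the coaction $\phi$ reduces to the comultiplication $\Delta$ of $U_q(\mathrm{sl}_n)$ on the image of $U'_q(\mathrm{so}_n)$.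
   Context: Fix $q\in\mathbb{C}$, $q\ne0,\pm1$, not a root of unity, and a square root $q^{1/2}$. The algebra $U'_q(\mathrm{so}_n)$ is the unital complex associative algebra generated by $I_{21},I_{32},\dots,I_{n,n-1}$ with relations $I_{j,j-1}^2I_{j-1,j-2}+I_{j-1,j-2}I_{j,j-1}^2-(q+q^{-1})I_{j,j-1}I_{j-1,j-2}I_{j,j-1}=-I_{j-1,j-2}$, $I_{j-1,j-2}^2I_{j,j-1}+I_{j,j-1}I_{j-1,j-2}^2-(q+q^{-1})I_{j-1,j-2}I_{j,j-1}I_{j-1,j-2}=-I_{j,j-1}$, and $[I_{i,i-1},I_{j,j-1}]=0$ if $|i-j|>1$. The Drinfeld–Jimbo algebra $U_q(\mathrm{sl}_n)$ is generated by $e_i,f_i,k_i,k_i^{-1}$ ($i=1,\dots,n-1$) with relations $k_ik_i^{-1}=k_i^{-1}k_i=1$, $k_ik_j=k_jk_i$, $k_ie_jk_i^{-1}=q^{a_{ij}}e_j$, $k_if_jk_i^{-1}=q^{-a_{ij}}f_j$, $[e_i,e_j]=[f_i,f_j]=0$ for $|i-j|>1$, $[e_i,f_j]=\delta_{ij}(k_i-k_i^{-1})/(q-q^{-1})$, and the quantum Serre relations $e_i^2e_{i\pm1}-(q+q^{-1})e_ie_{i\pm1}e_i+e_{i\pm1}e_i^2=0$ and the same for $f$'s; here $a_{ii}=2$, $a_{i,i\pm1}=-1$, $a_{ij}=0$ otherwise. It is a Hopf algebra with $\Delta(e_i)=e_i\otimes k_i^{-1}+1\otimes e_i$, $\Delta(f_i)=f_i\otimes1+k_i\otimes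 f_i$, $\Delta(k_i)=k_i\otimes k_i$, counit $\varepsilon(e_i)=\varepsilon(f_i)=0$, $\varepsilon(k_i)=1$. Put $\tilde I_{i+1,i}=f_i-q^{-1}k_ie_i\in U_q(\mathrm{sl}_n)$; these elements satisfy the defining relations of $U'_q(\mathrm{so}_n)$. *)

From HB Require Import structures.
From mathcomp Require Import all_boot all_order all_algebra.
From mathcomp Require Import Rstruct complex.
From Stdlib Require Import Rdefinitions.
Set Implicit Arguments. Unset Strict Implicit. Unset Printing Implicit Defensive.
Import Order.TTheory GRing.Theory Num.Theory.
Local Open Scope ring_scope.

Definition Cx : fieldType := complex Rdefinitions.R.

Section Presented.
Variable K : fieldType.

Inductive term (X : Type) : Type :=
| tGen of X
| tC of K
| tAdd of term X & term X
| tMul of term X & term X.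
Arguments tC {X}.

Definition tSub X (a b : term X) := tAdd a (tMul (tC (-1)) b).
Definition tOpp X (a : term X) := tMul (tC (-1)) a.

Fixpoint subst (X Y : Type) (f : X -> term Y) (t : term X) : term Y :=
  match t with
  | tGen x => f x
  | tC c => tC c
  | tAdd a b => tAdd (subst f a) (subst f b)
  | tMul a b => tMul (subst f a) (subst f b)
  end.

Definition relation (X : Type) := term X -> term X -> Prop.

(** The congruence generated by the unital associative K-algebra axioms
   and the defining relations: terms modulo [eqv r] form the algebra
   K<X>/(a - b : r a b). *)
Inductive eqv (X : Type) (r : relation X) : term X -> term X -> Prop :=
| eqv_rel a b : r a b -> eqv r a b
| eqv_refl a : eqv r a a
| eqv_sym a b : eqv r a b -> eqv r b a
| eqv_trans a b c : eqv r a b -> eqv r b c -> eqv r a c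
| eqv_add a a' b b' : eqv r a a' -> eqv r b b' -> eqv r (tAdd a b) (tAdd a' b')
| eqv_mul a a' b b' : eqv r a a' -> eqv r b b' -> eqv r (tMul a b) (tMul a' b')
| eqv_addA a b c : eqv r (tAdd (tAdd a b) c) (tAdd a (tAdd b c))
| eqv_addC a b : eqv r (tAdd a b) (tAdd b a)
| eqv_add0 a : eqv r (tAdd (tC 0) a) a
| eqv_addN a : eqv r (tAdd a (tMul (tC (-1)) a)) (tC 0)
| eqv_mulA a b c : eqv r (tMul (tMul a b) c) (tMul a (tMul b c))
| eqv_mul1l a : eqv r (tMul (tC 1) a) a
| eqv_mul1r a : eqv r (tMul a (tC 1)) a
| eqv_mulDl a b c : eqv r (tMul (tAdd a b) c) (tAdd (tMul a c) (tMul b c))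
| eqv_mulDr a b c : eqv r (tMul a (tAdd b c)) (tAdd (tMul a b) (tMul a c))
| eqv_Cadd (c d : K) : eqv r (tAdd (tC c) (tC d)) (tC (c + d))
| eqv_Cmul (c d : K) : eqv r (tMul (tC c) (tC d)) (tC (c * d))
| eqv_Ccomm (c : K) a : eqv r (tMul (tC c) a) (tMul a (tC c)).

Record pres := Pres { gens : Type; rels : relation gens }.

(** An assignment of generators extends to a (unital) algebra
   homomorphism iff it respects the congruence. *)
Definition is_alg_hom (P Q : pres) (f : gens P -> term (gens Q)) : Prop :=
  forall a b, eqv (@rels P) a b -> eqv (@rels Q) (subst f a) (subst f b).

(** Tensor product A (x) B of presented algebras: generators of both,
   both sets of relations, and the two families of generators commute.
   Here [tGen (inl x)] stands for x (x) 1 and [tGen (inr y)] for 1 (x) y. *)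
Inductive tens_rel (X Y : Type) (r1 : relation X) (r2 : relation Y) :
  relation (X + Y) :=
| tr_l a b : r1 a b ->
    tens_rel r1 r2 (subst (fun x => tGen (inl x)) a) (subst (fun x => tGen (inl x)) b)
| tr_r a b : r2 a b ->
    tens_rel r1 r2 (subst (fun y => tGen (inr y)) a) (subst (fun y => tGen (inr y)) b)
| tr_comm x y :
    tens_rel r1 r2 (tMul (tGen (inl x)) (tGen (inr y)))
                   (tMul (tGen (inr y)) (tGen (inl x))).

Definition tensor (P Q : pres) : pres :=
  Pres (@tens_rel (gens P) (gens Q) (@rels P) (@rels Q)).

End Presented.
Arguments tC {K X}.
Arguments rels {K} p.
Arguments tGen {K X}.
Arguments tAdd {K X}.
Arguments tMul {K X}.

Section Quantum.
Variables (q : Cx) (n : nat).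

(** index i : 'I_n.-1 stands for the paper's index i+1 in {1,...,n-1} *)
Local Notation idx := 'I_n.-1.

Definition adjacent (i j : idx) : bool := (i.+1 == j :> nat) || (j.+1 == i :> nat).
Definition far (i j : idx) : bool := ltn i.+1 j || ltn j.+1 i.

Definition cartan (i j : idx) : int :=
  if i == j then 2%:Z else if adjacent i j then (-1)%:~R else 0.

Inductive slgen : Type :=
| gE of idx
| gF of idx
| gK of idx
| gKi of idx.

Local Notation T := (term Cx slgen).
Local Notation "a + b" := (tAdd a b).
Local Notation "a * b" := (tMul a b).
Local Notation "a - b" := (tSub a b).
Local Notation "c %:T" := (tC c).

Definition qint2 : Cx := q + q^-1.

Inductive sl_rel : relation Cx slgen :=
| sl_kki i : sl_rel ((tGen (gK i)) * (tGen (gKi i))) (1%:T)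
| sl_kik i : sl_rel ((tGen (gKi i)) * (tGen (gK i))) (1%:T)
| sl_kk i j : sl_rel ((tGen (gK i)) * (tGen (gK j))) ((tGen (gK j)) * (tGen (gK i)))
| sl_ke i j : sl_rel ((tGen (gK i)) * (tGen (gE j)) * (tGen (gKi i))) ((q ^ cartan i j)%:T * (tGen (gE j)))
| sl_kf i j : sl_rel ((tGen (gK i)) * (tGen (gF j)) * (tGen (gKi i))) ((q ^ (- cartan i j))%:T * (tGen (gF j)))
| sl_ee i j : far i j -> sl_rel ((tGen (gE i)) * (tGen (gE j))) ((tGen (gE j)) * (tGen (gE i)))
| sl_ff i j : far i j -> sl_rel ((tGen (gF i)) * (tGen (gF j))) ((tGen (gF j)) * (tGen (gF i)))
| sl_ef i j : sl_rel ((tGen (gE i)) * (tGen (gF j)) - (tGen (gF j)) * (tGen (gE i)))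
    (if i == j then ((q - q^-1)^-1)%:T * ((tGen (gK i)) - (tGen (gKi i))) else 0%:T)
| sl_serre_e i j : adjacent i j ->
    sl_rel ((tGen (gE i)) * (tGen (gE i)) * (tGen (gE j)) - qint2%:T * (tGen (gE i)) * (tGen (gE j)) * (tGen (gE i))
            + (tGen (gE j)) * (tGen (gE i)) * (tGen (gE i))) (0%:T)
| sl_serre_f i j : adjacent i j ->
    sl_rel ((tGen (gF i)) * (tGen (gF i)) * (tGen (gF j)) - qint2%:T * (tGen (gF i)) * (tGen (gF j)) * (tGen (gF i))
            + (tGen (gF j)) * (tGen (gF i)) * (tGen (gF i))) (0%:T).

Definition Usl : pres Cx := Pres sl_rel.

Inductive sogen : Type := gI of idx.

Inductive so_rel : relation Cx sogen :=
(* a = I_{j,j-1}, b = I_{j-1,j-2} with i = index of b, j = i+1 *)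
| so_1 (i j : idx) : (i.+1 == j :> nat) ->
    so_rel ((tGen (gI j)) * (tGen (gI j)) * (tGen (gI i)) + (tGen (gI i)) * (tGen (gI j)) * (tGen (gI j))
            - qint2%:T * (tGen (gI j)) * (tGen (gI i)) * (tGen (gI j))) (tOpp ((tGen (gI i))))
| so_2 (i j : idx) : (i.+1 == j :> nat) ->
    so_rel ((tGen (gI i)) * (tGen (gI i)) * (tGen (gI j)) + (tGen (gI j)) * (tGen (gI i)) * (tGen (gI i))
            - qint2%:T * (tGen (gI i)) * (tGen (gI j)) * (tGen (gI i))) (tOpp ((tGen (gI j))))
| so_3 (i j : idx) : far i j -> so_rel ((tGen (gI i)) * (tGen (gI j))) ((tGen (gI j)) * (tGen (gI i))).

Definition Uso : pres Cx := Pres so_rel.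

Definition Delta (g : slgen) : term Cx (slgen + slgen) :=
  match g with
  | gE i => (tGen (inl (gE i))) * (tGen (inr (gKi i))) + (tGen (inr (gE i)))
  | gF i => (tGen (inl (gF i))) + (tGen (inl (gK i))) * (tGen (inr (gF i)))
  | gK i => (tGen (inl (gK i))) * (tGen (inr (gK i)))
  | gKi i => (tGen (inl (gKi i))) * (tGen (inr (gKi i)))
  end.

Definition eps (g : slgen) : Cx :=
  match g with gE _ | gF _ => 0 | gK _ | gKi _ => 1 end.

Definition Itilde (i : idx) : T := (tGen (gF i)) - (q^-1)%:T * (tGen (gK i)) * (tGen (gE i)).

Definition iota_so (g : sogen) : T := match g with gI i => Itilde i end.

Definition phi (g : sogen) : term Cx (slgen + sogen) :=
  match g with gI i =>
    subst (fun x => tGen (inl x)) (Itilde i) + (tGen (inl (gK i))) * (tGen (inr (gI i)))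
  end.

Definition Delta_id (g : slgen + sogen) : term Cx (slgen + (slgen + sogen)) :=
  match g with
  | inl x => subst (fun s => match s with
                             | inl a => tGen (inl a)
                             | inr b => tGen (inr (inl b)) end) (Delta x)
  | inr y => (tGen (inr (inr y)))
  end.

Definition id_phi (g : slgen + sogen) : term Cx (slgen + (slgen + sogen)) :=
  match g with
  | inl x => (tGen (inl x))
  | inr y => subst (fun s => tGen (inr s)) (phi y)
  end.

Definition eps_id (g : slgen + sogen) : term Cx sogen :=
  match g with
  | inl x => (eps x)%:T
  | inr y => tGen y
  end.

Definition id_iota (g : slgen + sogen) : term Cx (slgen + slgen) :=
  match g with
  | inl x => (tGen (inl x))
  | inr y => subst (fun s => tGen (inr s)) (iota_so y)
  end.

End Quantum.

From Pilot Require Import Defs.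
From Stdlib Require Import Setoid Morphisms.
From HB Require Import structures.
From mathcomp Require Import all_boot all_order all_algebra.
From mathcomp Require Import Rstruct complex.
From mathcomp Require Import ring zify.
Import GRing.Theory.
Set Implicit Arguments. Unset Strict Implicit.
Local Open Scope ring_scope.

(* Every assertion is an identity between explicit noncommutative polynomials,
   and it suffices to check it on generators (for phi: on the defining
   relations of U'_q(so_n), which involve two indices a, b).  Both sides are
   expanded into linear combinations of words in the finitely many generators
   involved (f_a, f_b, k_a^(+-1), k_b^(+-1), e_a, e_b, I_a, I_b) and brought to a
   common normal form by oriented consequences of the relations: the
   q-commutation of the k's with the e's and f's, [e_i, f_i] =
   (k_i - k_i^-1)/(q - q^-1), the Serre relations, the cubic relations of
   U'_q(so_n) and the commutation of the two tensor factors.  The remaining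
   coefficient identities are rational identities in q, which hold as soon as
   q != 0 and q^2 != 1. *)

Add Parametric Relation (K : fieldType) (X : Type) (r : Defs.relation K X) :
  (term K X) (@eqv K X r)
  reflexivity proved by (@eqv_refl K X r)
  symmetry proved by (@eqv_sym K X r)
  transitivity proved by (@eqv_trans K X r) as eqv_setoid.
Add Parametric Morphism (K : fieldType) (X : Type) (r : Defs.relation K X) : (@tAdd K X)
  with signature (@eqv K X r) ==> (@eqv K X r) ==> (@eqv K X r) as tAdd_eqv.
Proof. by move=> *; apply: eqv_add. Qed.
Add Parametric Morphism (K : fieldType) (X : Type) (r : Defs.relation K X) : (@tMul K X)
  with signature (@eqv K X r) ==> (@eqv K X r) ==> (@eqv K X r) as tMul_eqv.
Proof. by move=> *; apply: eqv_mul. Qed.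

#[local] Hint Resolve eqv_refl : core.

Lemma subst_comp (K : fieldType) (X Y Z : Type) (f : Y -> term K Z) (g : X -> term K Y) t :
  subst f (subst g t) = subst (fun x => subst f (g x)) t.
Proof. by elim: t => //= a -> b ->. Qed.

Lemma subst_tGen (K : fieldType) (X : Type) (t : term K X) : subst tGen t = t.
Proof. by elim: t => //= a -> b ->. Qed.

Lemma eqv_subst_ext (K : fieldType) (X Y : Type) (r : Defs.relation K Y)
    (f1 f2 : X -> term K Y) :
  (forall x, eqv r (f1 x) (f2 x)) -> forall t, eqv r (subst f1 t) (subst f2 t).
Proof. by move=> H; elim=> /= [x|c|a Ha b Hb|a Ha b Hb]; [exact: H | | rewrite Ha Hb ..]. Qed.

Lemma eqv_subst (K : fieldType) (X Y : Type) (r1 : Defs.relation K X)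
    (r2 : Defs.relation K Y) (f : X -> term K Y) :
  (forall a b, r1 a b -> eqv r2 (subst f a) (subst f b)) ->
  forall a b, eqv r1 a b -> eqv r2 (subst f a) (subst f b).
Proof.
move=> Hf a b; elim=> /= *; first [exact: Hf | by constructor | by etransitivity; eauto].
Qed.

Section TermAlgebra.
Variables (K : fieldType) (X : Type) (r : Defs.relation K X).
Local Notation "a ≡ b" := (eqv r a b) (at level 70).
Implicit Types (a b : term K X) (c d : K).

Lemma eqv_addr0 a : tAdd a (tC 0) ≡ a.
Proof. by rewrite eqv_addC eqv_add0. Qed.

Lemma eqv_addNr a : tAdd (tMul (tC (-1)) a) a ≡ tC 0.
Proof. by rewrite eqv_addC eqv_addN. Qed.

Lemma eqv_mul0r a : tMul (tC 0) a ≡ tC 0.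
Proof.
have E : tAdd (tMul (tC 0) a) (tMul (tC 0) a) ≡ tMul (tC 0) a.
  by rewrite -eqv_mulDl eqv_Cadd addr0.
transitivity (tAdd (tAdd (tMul (tC 0) a) (tMul (tC 0) a)) (tMul (tC (-1)) (tMul (tC 0) a))).
  by rewrite eqv_addA eqv_addN eqv_addr0.
by rewrite E eqv_addN.
Qed.

Lemma eqv_mulr0 a : tMul a (tC 0) ≡ tC 0.
Proof. by rewrite -eqv_Ccomm eqv_mul0r. Qed.

Lemma eqv_CmulA c d a : tMul (tC c) (tMul (tC d) a) ≡ tMul (tC (c * d)) a.
Proof. by rewrite -eqv_mulA eqv_Cmul. Qed.

Lemma eqv_CmulDl c d a : tAdd (tMul (tC c) a) (tMul (tC d) a) ≡ tMul (tC (c + d)) a.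
Proof. by rewrite -eqv_mulDl eqv_Cadd. Qed.

Lemma eqv_CmulAr c a b : tMul a (tMul (tC c) b) ≡ tMul (tC c) (tMul a b).
Proof. by rewrite -eqv_mulA -eqv_Ccomm eqv_mulA. Qed.

Lemma eqv_subr0_eq a b : tAdd a (tMul (tC (-1)) b) ≡ tC 0 -> a ≡ b.
Proof. by move=> H; rewrite -[b]eqv_add0 -H eqv_addA eqv_addNr eqv_addr0. Qed.

End TermAlgebra.

Section Rewriting.
Variables (K : fieldType) (X : Type) (r : Defs.relation K X) (gen : nat -> term K X).
Local Notation "a ≡ b" := (eqv r a b) (at level 70).

Definition word := seq nat.
Definition monomial := (K * word)%type.
Definition ncpoly := seq monomial.

Fixpoint eval_word (w : word) : term K X :=
  if w is a :: w' then tMul (gen a) (eval_word w') else tC 1.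
Definition eval_mono (m : monomial) : term K X := tMul (tC m.1) (eval_word m.2).
Fixpoint eval_poly (p : ncpoly) : term K X :=
  if p is m :: p' then tAdd (eval_mono m) (eval_poly p') else tC 0.

Definition mul_mono (m1 m2 : monomial) : monomial := (m1.1 * m2.1, m1.2 ++ m2.2).
Fixpoint mul_poly (p1 p2 : ncpoly) : ncpoly :=
  if p1 is m :: p1' then map (mul_mono m) p2 ++ mul_poly p1' p2 else [::].
Definition opp_poly (p : ncpoly) : ncpoly := map (fun m => (- m.1, m.2)) p.

Fixpoint poly_of_term (t : term K nat) : ncpoly :=
  match t with
  | tGen a => [:: (1, [:: a])]
  | tC c => [:: (c, [::])]
  | tAdd a b => poly_of_term a ++ poly_of_term b
  | tMul a b => mul_poly (poly_of_term a) (poly_of_term b)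
  end.

Lemma eval_word_cat u v : eval_word (u ++ v) ≡ tMul (eval_word u) (eval_word v).
Proof. by elim: u => [|a u IH] /=; rewrite ?eqv_mul1l // IH eqv_mulA. Qed.

Lemma eval_poly_cat p p' : eval_poly (p ++ p') ≡ tAdd (eval_poly p) (eval_poly p').
Proof. by elim: p => [|m p IH] /=; rewrite ?eqv_add0 // IH eqv_addA. Qed.

Lemma eval_mul_mono m1 m2 : eval_mono (mul_mono m1 m2) ≡ tMul (eval_mono m1) (eval_mono m2).
Proof.
case: m1 m2 => [c1 w1] [c2 w2]; rewrite /eval_mono /=.
by rewrite eval_word_cat eqv_mulA eqv_CmulAr eqv_CmulA.
Qed.

Lemma eval_mul_poly p1 p2 : eval_poly (mul_poly p1 p2) ≡ tMul (eval_poly p1) (eval_poly p2).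
Proof.
elim: p1 => [|m p IH] /=; first by rewrite eqv_mul0r.
rewrite eval_poly_cat IH eqv_mulDl; apply: eqv_add => //.
elim: p2 {IH} => [|m2 p2 IH] /=; first by rewrite eqv_mulr0.
by rewrite IH eval_mul_mono eqv_mulDr.
Qed.

Lemma eval_opp_poly p : eval_poly (opp_poly p) ≡ tMul (tC (-1)) (eval_poly p).
Proof.
elim: p => [|[c w] p IH] /=; first by rewrite eqv_mulr0.
by rewrite IH eqv_mulDr /eval_mono /= eqv_CmulA mulN1r.
Qed.

Lemma eval_poly_of_term t : subst gen t ≡ eval_poly (poly_of_term t).
Proof.
elim: t => [a|c|a IHa b IHb|a IHa b IHb] /=.
- by rewrite /eval_mono /= eqv_mul1r eqv_addr0 eqv_mul1l.
- by rewrite /eval_mono /= eqv_addr0 eqv_mul1r.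
- by rewrite eval_poly_cat IHa IHb.
- by rewrite eval_mul_poly IHa IHb.
Qed.

Fixpoint strip_prefix (l w : word) : option word :=
  match l, w with
  | [::], _ => Some w
  | a :: l', b :: w' => if eqn a b then strip_prefix l' w' else None
  | _ :: _, [::] => None
  end.

Fixpoint find_factor (l w : word) : option (word * word) :=
  if strip_prefix l w is Some v then Some ([::], v) else
  if w is b :: w' then
    if find_factor l w' is Some (u, v) then Some (b :: u, v) else None
  else None.

Lemma strip_prefixP l w v : strip_prefix l w = Some v -> w = l ++ v.
Proof.
elim: l w => [|a l IH] w /=; first by case=> ->.
by case: w => [|b w] //; case: eqnP => // -> /IH ->.
Qed.

Lemma find_factorP l w u v : find_factor l w = Some (u, v) -> w = u ++ l ++ v.
Proof.
elim: w u v => [|b w IH] u v /=.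
  by case E: (strip_prefix l [::]) => [v'|] // [<- <-]; rewrite -(strip_prefixP E).
case E: (strip_prefix l (b :: w)) => [v'|].
  by case=> <- <-; rewrite -(strip_prefixP E).
by case F: (find_factor l w) => [[u' v']|] // [<- <-]; rewrite (IH _ _ F).
Qed.

(** A rule [(l, p)] rewrites the factor [l] of a word into the polynomial [p]. *)
Definition rule := (word * ncpoly)%type.

Fixpoint valid_rules (rs : seq rule) : Prop :=
  if rs is rl :: rs' then eval_word rl.1 ≡ eval_poly rl.2 /\ valid_rules rs' else True.

Lemma valid_rules_cat rs rs' :
  valid_rules rs -> valid_rules rs' -> valid_rules (rs ++ rs').
Proof. by elim: rs => //= rl rs IH [? ?] ?; split; last exact: IH. Qed.

Definition plug_mono (c : K) (u v : word) (m : monomial) : monomial :=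
  (c * m.1, u ++ m.2 ++ v).

Fixpoint rewrite_mono (rs : seq rule) (c : K) (w : word) : option ncpoly :=
  if rs is (l, p) :: rs' then
    if find_factor l w is Some (u, v) then Some (map (plug_mono c u v) p)
    else rewrite_mono rs' c w
  else None.

Lemma eval_plug_mono c u v p :
  eval_poly (map (plug_mono c u v) p)
  ≡ tMul (tC c) (tMul (eval_word u) (tMul (eval_poly p) (eval_word v))).
Proof.
elim: p => [|[c' w'] p IH] /=; first by rewrite eqv_mul0r !eqv_mulr0.
rewrite IH /eval_mono /= !eqv_mulDl !eqv_mulDr; apply: eqv_add => //.
by rewrite !eval_word_cat !eqv_mulA 2!eqv_CmulAr eqv_CmulA [c' * c]mulrC.
Qed.

Lemma rewrite_monoP rs c w p :
  valid_rules rs -> rewrite_mono rs c w = Some p -> eval_mono (c, w) ≡ eval_poly p.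
Proof.
elim: rs => [|[l rhs] rs IH] //= [Hl Hrs].
case F: (find_factor l w) => [[u v]|]; last exact: IH.
case=> <-; rewrite eval_plug_mono /eval_mono /= (find_factorP F) !eval_word_cat Hl.
reflexivity.
Qed.

Fixpoint rewrite_step (rs : seq rule) (p : ncpoly) : ncpoly :=
  if p is (c, w) :: p' then
    if rewrite_mono rs c w is Some p1 then p1 ++ rewrite_step rs p'
    else (c, w) :: rewrite_step rs p'
  else [::].

Fixpoint rewrite_iter (k : nat) (rs : seq rule) (p : ncpoly) : ncpoly :=
  if k is k'.+1 then rewrite_iter k' rs (rewrite_step rs p) else p.

Lemma eval_rewrite_iter k rs p :
  valid_rules rs -> eval_poly (rewrite_iter k rs p) ≡ eval_poly p.
Proof.
move=> Hrs; elim: k p => [|k IH] p //=; rewrite IH.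
elim: p => [|[c w] p IHp] //=.
case E: (rewrite_mono rs c w) => [p1|] /=; last by rewrite IHp.
by rewrite eval_poly_cat IHp (rewrite_monoP Hrs E).
Qed.

Fixpoint eqword (u v : word) : bool :=
  match u, v with
  | [::], [::] => true
  | a :: u', b :: v' => eqn a b && eqword u' v'
  | _, _ => false
  end.

Lemma eqwordP u v : eqword u v -> u = v.
Proof. by elim: u v => [|a u IH] [|b v] //= /andP [/eqnP -> /IH ->]. Qed.

Lemma eqword_refl u : eqword u u.
Proof. by elim: u => //= a u ->; rewrite eqnE eqxx. Qed.

Fixpoint coef_word (w : word) (p : ncpoly) : K :=
  if p is (c, w') :: p' then
    if eqword w w' then c + coef_word w p' else coef_word w p'
  else 0.

Fixpoint drop_word (w : word) (p : ncpoly) : ncpoly :=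
  if p is (c, w') :: p' then
    if eqword w w' then drop_word w p' else (c, w') :: drop_word w p'
  else [::].

Lemma eval_poly_coef_word w p :
  eval_poly p ≡ tAdd (tMul (tC (coef_word w p)) (eval_word w)) (eval_poly (drop_word w p)).
Proof.
elim: p => [|[c w'] p IH] /=; first by rewrite eqv_mul0r eqv_addr0.
case E: (eqword w w'); rewrite IH /eval_mono /=.
  by rewrite (eqwordP E) -eqv_addA eqv_CmulDl.
by rewrite -!eqv_addA (eqv_addC _ (tMul (tC c) _)).
Qed.

(* The fuel [k] bounds the number of distinct words in [p]. *)
Fixpoint zero_coefs (k : nat) (p : ncpoly) : Prop :=
  if p is (c, w) :: p' then
    if k is k'.+1 then coef_word w p = 0 /\ zero_coefs k' (drop_word w p') else False
  else True.

Lemma zero_coefsP k p : zero_coefs k p -> eval_poly p ≡ tC 0.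
Proof.
elim: k p => [|k IH] [|[c w] p] // [H0 H].
rewrite (eval_poly_coef_word w) H0 eqv_mul0r eqv_add0 /= eqword_refl.
exact: IH.
Qed.

Lemma eqv_by_rewriting k rs t1 t2 :
  valid_rules rs ->
  zero_coefs 4000 (rewrite_iter k rs (poly_of_term t1 ++ opp_poly (poly_of_term t2))) ->
  subst gen t1 ≡ subst gen t2.
Proof.
move=> Hrs /zero_coefsP; rewrite eval_rewrite_iter // eval_poly_cat eval_opp_poly.
by rewrite -!eval_poly_of_term; apply: eqv_subr0_eq.
Qed.

Lemma eqv_by_rewriting_from k rs t1 t2 u v x y :
  valid_rules rs -> subst gen x ≡ subst gen y ->
  zero_coefs 4000 (rewrite_iter k rs (poly_of_term t1 ++ opp_poly (poly_of_term t2) ++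
    opp_poly (poly_of_term (tMul (tMul u x) v)) ++ poly_of_term (tMul (tMul u y) v))) ->
  subst gen t1 ≡ subst gen t2.
Proof.
move=> Hrs Hxy /zero_coefsP; rewrite eval_rewrite_iter // !eval_poly_cat !eval_opp_poly.
rewrite -!eval_poly_of_term /= Hxy eqv_addNr eqv_addr0.
exact: eqv_subr0_eq.
Qed.

End Rewriting.

(* The evaluation is restricted to the listed constants so that field
   operations on the coefficients stay folded for [field]. *)
Ltac compute_normal_form :=
  cbv [zero_coefs rewrite_iter rewrite_step rewrite_mono find_factor strip_prefix
       poly_of_term mul_poly mul_mono opp_poly map cat coef_word drop_word eqword eqn
       plug_mono fst snd andb qint2 tSub tOpp].
Ltac coef_side := repeat (apply/andP; split); try assumption; try exact: oner_neq0.
Ltac solve_coefs := compute_normal_form; repeat match goal with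
  | |- _ /\ _ => split
  | |- True => exact I
  | |- _ = _ => field; try done; coef_side
  end.

Definition gen_of_seq (K : fieldType) (X : Type) (l : seq (term K X)) (k : nat) : term K X :=
  nth (tC 0) l k.

Local Notation G k := (tGen k%N).
Local Notation "a ** b" := (tMul a b) (at level 40, left associativity).

Section CubicRelations.
Variables (K : fieldType) (X : Type) (r : Defs.relation K X) (c : K) (x y : term K X).
Local Notation "a ≡ b" := (eqv r a b) (at level 70).

Lemma serre_rearrange :
  tAdd (tSub (x ** x ** y) (tC c ** x ** y ** x)) (y ** x ** x) ≡ tC 0 ->
  y ** (x ** x) ≡ tAdd (tC c ** (x ** (y ** x))) (tC (-1) ** (x ** (x ** y))) /\
  x ** (x ** y) ≡ tAdd (tC c ** (x ** (y ** x))) (tC (-1) ** (y ** (x ** x))).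
Proof.
move=> H; split.
- refine (eqv_by_rewriting_from (gen := gen_of_seq [:: x; y]) (k := 1) (rs := [::])
    (t1 := G 1 ** (G 0 ** G 0))
    (t2 := tAdd (tC c ** (G 0 ** (G 1 ** G 0))) (tC (-1) ** (G 0 ** (G 0 ** G 1))))
    (u := tC 1) (v := tC 1)
    (x := tAdd (tSub (G 0 ** G 0 ** G 1) (tC c ** G 0 ** G 1 ** G 0)) (G 1 ** G 0 ** G 0))
    (y := tC 0) I H _).
  solve_coefs.
- refine (eqv_by_rewriting_from (gen := gen_of_seq [:: x; y]) (k := 1) (rs := [::])
    (t1 := G 0 ** (G 0 ** G 1))
    (t2 := tAdd (tC c ** (G 0 ** (G 1 ** G 0))) (tC (-1) ** (G 1 ** (G 0 ** G 0))))
    (u := tC 1) (v := tC 1)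
    (x := tAdd (tSub (G 0 ** G 0 ** G 1) (tC c ** G 0 ** G 1 ** G 0)) (G 1 ** G 0 ** G 0))
    (y := tC 0) I H _).
  solve_coefs.
Qed.

Lemma so_cubic_rearrange :
  tSub (tAdd (x ** x ** y) (y ** x ** x)) (tC c ** x ** y ** x) ≡ tOpp y ->
  y ** (x ** x) ≡ tAdd (tC c ** (x ** (y ** x))) (tAdd (tC (-1) ** (x ** (x ** y))) (tC (-1) ** y)) /\
  x ** (x ** y) ≡ tAdd (tC c ** (x ** (y ** x))) (tAdd (tC (-1) ** (y ** (x ** x))) (tC (-1) ** y)).
Proof.
move=> H; split.
- refine (eqv_by_rewriting_from (gen := gen_of_seq [:: x; y]) (k := 1) (rs := [::])
    (t1 := G 1 ** (G 0 ** G 0))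
    (t2 := tAdd (tC c ** (G 0 ** (G 1 ** G 0)))
                (tAdd (tC (-1) ** (G 0 ** (G 0 ** G 1))) (tC (-1) ** G 1)))
    (u := tC 1) (v := tC 1)
    (x := tSub (tAdd (G 0 ** G 0 ** G 1) (G 1 ** G 0 ** G 0)) (tC c ** G 0 ** G 1 ** G 0))
    (y := tOpp (G 1)) I H _).
  solve_coefs.
- refine (eqv_by_rewriting_from (gen := gen_of_seq [:: x; y]) (k := 1) (rs := [::])
    (t1 := G 0 ** (G 0 ** G 1))
    (t2 := tAdd (tC c ** (G 0 ** (G 1 ** G 0)))
                (tAdd (tC (-1) ** (G 1 ** (G 0 ** G 0))) (tC (-1) ** G 1)))
    (u := tC 1) (v := tC 1)
    (x := tSub (tAdd (G 0 ** G 0 ** G 1) (G 1 ** G 0 ** G 0)) (tC c ** G 0 ** G 1 ** G 0))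
    (y := tOpp (G 1)) I H _).
  solve_coefs.
Qed.

End CubicRelations.

Section Cartan.
Variable n : nat.
Implicit Types i j : 'I_n.-1.

Lemma adjacent_sym i j : adjacent i j = adjacent j i.
Proof. by rewrite /adjacent orbC. Qed.

Lemma far_sym i j : far i j = far j i.
Proof. by rewrite /far orbC. Qed.

Lemma adjacent_neq i j : adjacent i j -> i != j.
Proof. by rewrite /adjacent; apply: contraTneq => ->; rewrite orbb eqn_leq ltnn. Qed.

Lemma far_neq i j : far i j -> i != j.
Proof. by rewrite /far; apply: contraTneq => ->; rewrite orbb; apply/negP => /ltP; lia. Qed.

Lemma far_nadjacent i j : far i j -> ~~ adjacent i j.
Proof.
by rewrite /far /adjacent; case/orP=> /ltP H; apply/norP; split; apply/eqP; lia.
Qed.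

Variable q : Cx.

Lemma q_cartan_diag i : q ^ cartan i i = q * q.
Proof. by rewrite /cartan eqxx; exact: expr2. Qed.

Lemma q_cartan_adjacent i j : adjacent i j -> q ^ cartan i j = q^-1.
Proof. by move=> H; rewrite /cartan (negbTE (adjacent_neq H)) H exprN1. Qed.

Lemma q_cartan_far i j : far i j -> q ^ cartan i j = 1.
Proof.
by move=> H; rewrite /cartan (negbTE (far_neq H)) (negbTE (far_nadjacent H)) expr0z.
Qed.

End Cartan.

Section DerivedSlRelations.
Variables (q : Cx) (n : nat) (Y : Type) (R : Defs.relation Cx Y) (g : slgen n -> term Cx Y).
Hypothesis Hsl : forall a b, sl_rel q a b -> eqv R (subst g a) (subst g b).
Hypotheses (q_neq0 : q != 0) (qq_neq1 : q * q - 1 != 0).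
Local Notation "a ≡ b" := (eqv R a b) (at level 70).
Local Notation E i := (g (gE i)).
Local Notation F i := (g (gF i)).
Local Notation Kk i := (g (gK i)).
Local Notation Ki i := (g (gKi i)).
Implicit Types i j : 'I_n.-1.

Lemma kkinv1 i : Kk i ** Ki i ≡ tC 1. Proof. exact: (Hsl (sl_kki q i)). Qed.
Lemma kinvk1 i : Ki i ** Kk i ≡ tC 1. Proof. exact: (Hsl (sl_kik q i)). Qed.
Lemma kk_comm i j : Kk i ** Kk j ≡ Kk j ** Kk i. Proof. exact: (Hsl (sl_kk q i j)). Qed.

Lemma kkinv_comm i j : Kk i ** Ki j ≡ Ki j ** Kk i.
Proof.
have rs_ok : valid_rules R (gen_of_seq [:: Kk i; Ki i; Kk j; Ki j])
    [:: ([:: 3; 2]%N, [:: (1, [::])]); ([:: 2; 3]%N, [:: (1, [::])])].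
  by split; [|split=> //]; rewrite /= /eval_mono /= ?eqv_mul1l eqv_mul1r ?eqv_addr0;
    [exact: kinvk1 | exact: kkinv1].
refine (eqv_by_rewriting_from (k := 5) (t1 := G 0 ** G 3) (t2 := G 3 ** G 0)
  (u := G 3) (v := G 3) (x := G 2 ** G 0) (y := G 0 ** G 2) rs_ok (kk_comm _ _) _).
solve_coefs.
Qed.

Lemma kinvkinv_comm i j : Ki i ** Ki j ≡ Ki j ** Ki i.
Proof.
have rs_ok : valid_rules R (gen_of_seq [:: Kk i; Ki i; Kk j; Ki j])
    [:: ([:: 1; 0]%N, [:: (1, [::])]); ([:: 0; 1]%N, [:: (1, [::])]);
        ([:: 3; 2]%N, [:: (1, [::])]); ([:: 2; 3]%N, [:: (1, [::])])].
  by do 4 (split; [rewrite /= /eval_mono /= eqv_mul1l eqv_mul1r eqv_addr0;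
                   first [exact: kinvk1 | exact: kkinv1]|]).
refine (eqv_by_rewriting_from (k := 8) (t1 := G 1 ** G 3) (t2 := G 3 ** G 1)
  (u := G 3 ** G 1) (v := G 1 ** G 3) (x := G 0 ** G 2) (y := G 2 ** G 0)
  rs_ok (kk_comm _ _) _).
solve_coefs.
Qed.

Lemma ke_comm i j c : q ^ cartan i j = c -> Kk i ** E j ≡ tC c ** (E j ** Kk i).
Proof.
move=> Hc; have H := Hsl (sl_ke q i j); rewrite Hc in H.
have rs_ok : valid_rules R (gen_of_seq [:: Kk i; Ki i; E j]) [:: ([:: 1; 0]%N, [:: (1, [::])])].
  by split=> //; rewrite /= /eval_mono /= eqv_mul1l eqv_mul1r eqv_addr0; exact: kinvk1.
refine (eqv_by_rewriting_from (k := 5) (t1 := G 0 ** G 2) (t2 := tC c ** (G 2 ** G 0))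
  (u := tC 1) (v := G 0) (x := G 0 ** G 2 ** G 1) (y := tC c ** G 2) rs_ok H _).
solve_coefs.
Qed.

Section NonzeroCoefficient.
Variables (i j : 'I_n.-1) (c : Cx).
Hypotheses (Hc : q ^ cartan i j = c) (c_neq0 : c != 0).

Let kK_rules_ok (x : term Cx Y) :
  valid_rules R (gen_of_seq [:: Kk i; Ki i; x])
    [:: ([:: 1; 0]%N, [:: (1, [::])]); ([:: 0; 1]%N, [:: (1, [::])])].
Proof.
by do 2 (split; [rewrite /= /eval_mono /= eqv_mul1l eqv_mul1r eqv_addr0;
                 first [exact: kinvk1 | exact: kkinv1]|]).
Qed.

Lemma kf_comm : Kk i ** F j ≡ tC c^-1 ** (F j ** Kk i).
Proof.
have H := Hsl (sl_kf q i j); rewrite -invr_expz Hc in H.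
have rs_ok : valid_rules R (gen_of_seq [:: Kk i; Ki i; F j]) [:: ([:: 1; 0]%N, [:: (1, [::])])].
  by split=> //; rewrite /= /eval_mono /= eqv_mul1l eqv_mul1r eqv_addr0; exact: kinvk1.
refine (eqv_by_rewriting_from (k := 5) (t1 := G 0 ** G 2) (t2 := tC c^-1 ** (G 2 ** G 0))
  (u := tC 1) (v := G 0) (x := G 0 ** G 2 ** G 1) (y := tC c^-1 ** G 2) rs_ok H _).
solve_coefs.
Qed.

Lemma ek_comm : E j ** Kk i ≡ tC c^-1 ** (Kk i ** E j).
Proof.
refine (eqv_by_rewriting_from (gen := gen_of_seq [:: Kk i; Ki i; E j]) (k := 1) (rs := [::])
  (t1 := G 2 ** G 0) (t2 := tC c^-1 ** (G 0 ** G 2)) (u := tC (- c^-1)) (v := tC 1)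
  (x := G 0 ** G 2) (y := tC c ** (G 2 ** G 0)) I (ke_comm Hc) _).
solve_coefs.
Qed.

Lemma ekinv_comm : E j ** Ki i ≡ tC c ** (Ki i ** E j).
Proof.
refine (eqv_by_rewriting_from (k := 5) (t1 := G 2 ** G 1) (t2 := tC c ** (G 1 ** G 2))
  (u := G 1) (v := G 1) (x := G 0 ** G 2) (y := tC c ** (G 2 ** G 0))
  (kK_rules_ok (E j)) (ke_comm Hc) _).
solve_coefs.
Qed.

Lemma kinvf_comm : Ki i ** F j ≡ tC c ** (F j ** Ki i).
Proof.
refine (eqv_by_rewriting_from (k := 5) (t1 := G 1 ** G 2) (t2 := tC c ** (G 2 ** G 1))
  (u := tC (- c) ** G 1) (v := G 1) (x := G 0 ** G 2) (y := tC c^-1 ** (G 2 ** G 0))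
  (kK_rules_ok (F j)) kf_comm _).
solve_coefs.
Qed.

End NonzeroCoefficient.

Definition qdiff_inv := (q - q^-1)^-1.

Lemma ef_comm i :
  E i ** F i ≡ tAdd (F i ** E i) (tAdd (tC qdiff_inv ** Kk i) (tC (- qdiff_inv) ** Ki i)).
Proof.
have H := Hsl (sl_ef q i i); rewrite eqxx in H.
refine (eqv_by_rewriting_from (gen := gen_of_seq [:: E i; F i; Kk i; Ki i]) (k := 1)
  (rs := [::]) (t1 := G 0 ** G 1)
  (t2 := tAdd (G 1 ** G 0) (tAdd (tC qdiff_inv ** G 2) (tC (- qdiff_inv) ** G 3)))
  (u := tC 1) (v := tC 1) (x := tSub (G 0 ** G 1) (G 1 ** G 0))
  (y := tC qdiff_inv ** tSub (G 2) (G 3)) I H _).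
rewrite /qdiff_inv; solve_coefs.
Qed.

Lemma ef_comm_neq i j : i != j -> E i ** F j ≡ F j ** E i.
Proof.
move=> ij; have H := Hsl (sl_ef q i j); rewrite (negbTE ij) in H.
refine (eqv_by_rewriting_from (gen := gen_of_seq [:: E i; F j]) (k := 1) (rs := [::])
  (t1 := G 0 ** G 1) (t2 := G 1 ** G 0) (u := tC 1) (v := tC 1)
  (x := tSub (G 0 ** G 1) (G 1 ** G 0)) (y := tC 0) I H _).
solve_coefs.
Qed.

Lemma serre_e i j : adjacent i j ->
  E j ** (E i ** E i) ≡ tAdd (tC (qint2 q) ** (E i ** (E j ** E i))) (tC (-1) ** (E i ** (E i ** E j))) /\
  E i ** (E i ** E j) ≡ tAdd (tC (qint2 q) ** (E i ** (E j ** E i))) (tC (-1) ** (E j ** (E i ** E i))).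
Proof. by move=> ij; apply: serre_rearrange; apply: (Hsl (sl_serre_e q ij)). Qed.

Lemma serre_f i j : adjacent i j ->
  F j ** (F i ** F i) ≡ tAdd (tC (qint2 q) ** (F i ** (F j ** F i))) (tC (-1) ** (F i ** (F i ** F j))) /\
  F i ** (F i ** F j) ≡ tAdd (tC (qint2 q) ** (F i ** (F j ** F i))) (tC (-1) ** (F j ** (F i ** F i))).
Proof. by move=> ij; apply: serre_rearrange; apply: (Hsl (sl_serre_f q ij)). Qed.

(* Generators are numbered f_a, f_b, k_a, k_a^-1, k_b, k_b^-1, e_a, e_b
   (then further generators in [extra]); the rules move generators of
   smaller number to the left, [c] being q^(a_ab) = q^(a_ba). *)
Definition sl_pair_gens (a b : 'I_n.-1) (extra : seq (term Cx Y)) :=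
  gen_of_seq ([:: F a; F b; Kk a; Ki a; Kk b; Ki b; E a; E b] ++ extra).

Definition sl_pair_rules (c : Cx) : seq (rule Cx) :=
  [:: ([:: 2; 3]%N, [:: (1, [::])]);
      ([:: 3; 2]%N, [:: (1, [::])]);
      ([:: 4; 5]%N, [:: (1, [::])]);
      ([:: 5; 4]%N, [:: (1, [::])]);
      ([:: 4; 2]%N, [:: (1, [:: 2; 4]%N)]);
      ([:: 4; 3]%N, [:: (1, [:: 3; 4]%N)]);
      ([:: 5; 2]%N, [:: (1, [:: 2; 5]%N)]);
      ([:: 5; 3]%N, [:: (1, [:: 3; 5]%N)]);
      ([:: 6; 2]%N, [:: ((q * q)^-1, [:: 2; 6]%N)]);
      ([:: 6; 3]%N, [:: (q * q, [:: 3; 6]%N)]);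
      ([:: 2; 0]%N, [:: ((q * q)^-1, [:: 0; 2]%N)]);
      ([:: 3; 0]%N, [:: (q * q, [:: 0; 3]%N)]);
      ([:: 6; 0]%N, [:: (1, [:: 0; 6]%N); (qdiff_inv, [:: 2]%N); (- qdiff_inv, [:: 3]%N)]);
      ([:: 6; 4]%N, [:: (c^-1, [:: 4; 6]%N)]);
      ([:: 6; 5]%N, [:: (c, [:: 5; 6]%N)]);
      ([:: 4; 0]%N, [:: (c^-1, [:: 0; 4]%N)]);
      ([:: 5; 0]%N, [:: (c, [:: 0; 5]%N)]);
      ([:: 6; 1]%N, [:: (1, [:: 1; 6]%N)]);
      ([:: 7; 2]%N, [:: (c^-1, [:: 2; 7]%N)]);
      ([:: 7; 3]%N, [:: (c, [:: 3; 7]%N)]);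
      ([:: 2; 1]%N, [:: (c^-1, [:: 1; 2]%N)]);
      ([:: 3; 1]%N, [:: (c, [:: 1; 3]%N)]);
      ([:: 7; 0]%N, [:: (1, [:: 0; 7]%N)]);
      ([:: 7; 4]%N, [:: ((q * q)^-1, [:: 4; 7]%N)]);
      ([:: 7; 5]%N, [:: (q * q, [:: 5; 7]%N)]);
      ([:: 4; 1]%N, [:: ((q * q)^-1, [:: 1; 4]%N)]);
      ([:: 5; 1]%N, [:: (q * q, [:: 1; 5]%N)]);
      ([:: 7; 1]%N, [:: (1, [:: 1; 7]%N); (qdiff_inv, [:: 4]%N); (- qdiff_inv, [:: 5]%N)])].

Lemma valid_sl_pair_rules a b c extra :
  a != b -> q ^ cartan a b = c -> q ^ cartan b a = c ->
  valid_rules R (sl_pair_gens a b extra) (sl_pair_rules c).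
Proof.
move=> ab Cab Cba; have ba : b != a by rewrite eq_sym.
have c_neq0 : c != 0 by rewrite -Cab expfz_neq0.
have qq_neq0 : q * q != 0 by rewrite mulf_neq0.
have Caa := q_cartan_diag q a; have Cbb := q_cartan_diag q b.
rewrite /sl_pair_rules /=.
do 28 (split; [rewrite /eval_mono /= ?eqv_mul1l ?eqv_mul1r ?eqv_addr0;
  first [ exact: kkinv1 | exact: kinvk1 | exact: kk_comm | exact: kkinv_comm
        | symmetry; exact: kkinv_comm | exact: kinvkinv_comm
        | exact: ef_comm | exact: ef_comm_neq
        | exact: ek_comm | exact: ekinv_comm | exact: kf_comm | exact: kinvf_comm ] |]).
done.
Qed.

End DerivedSlRelations.

Section CoactionHom.
Variables (q : Cx) (n : nat).
Hypotheses (q_neq0 : q != 0) (qq_neq1 : q * q - 1 != 0).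
Local Notation R1 := (tens_rel (@sl_rel q n) (@so_rel q n)).
Local Notation "a ≡ b" := (eqv R1 a b) (at level 70).
Local Notation inl_sl := (fun x : slgen n => tGen (inl x) : term Cx (slgen n + sogen n)).
Local Notation Iso a := (tGen (inr (gI a)) : term Cx (slgen n + sogen n)).

Lemma sl_rel_inl a b : sl_rel q a b -> subst inl_sl a ≡ subst inl_sl b.
Proof. by move=> H; apply: eqv_rel; apply: tr_l. Qed.

Lemma so_rel_inr a b : so_rel q a b -> subst (fun y => tGen (inr y)) a ≡ subst (fun y => tGen (inr y)) b.
Proof. by move=> H; apply: eqv_rel; apply: tr_r. Qed.

Definition coaction_gens (a b : 'I_n.-1) := sl_pair_gens inl_sl a b [:: Iso a; Iso b].

Definition tensor_rules : seq (rule Cx) :=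
  [seq ([:: 8; k]%N, [:: (1, [:: k; 8]%N)]) | k <- iota 0 8] ++
  [seq ([:: 9; k]%N, [:: (1, [:: k; 9]%N)]) | k <- iota 0 8].

Lemma valid_tensor_rules a b : valid_rules R1 (coaction_gens a b) tensor_rules.
Proof.
rewrite /tensor_rules /=.
do 16 (split; [rewrite /eval_mono /= ?eqv_mul1l ?eqv_mul1r ?eqv_addr0; symmetry;
               apply: eqv_rel; exact: tr_comm |]).
done.
Qed.

Definition adjacent_rules : seq (rule Cx) :=
  [:: ([:: 7; 6; 6]%N, [:: (qint2 q, [:: 6; 7; 6]%N); (-1, [:: 6; 6; 7]%N)]);
      ([:: 7; 7; 6]%N, [:: (qint2 q, [:: 7; 6; 7]%N); (-1, [:: 6; 7; 7]%N)]);
      ([:: 1; 0; 0]%N, [:: (qint2 q, [:: 0; 1; 0]%N); (-1, [:: 0; 0; 1]%N)]);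
      ([:: 1; 1; 0]%N, [:: (qint2 q, [:: 1; 0; 1]%N); (-1, [:: 0; 1; 1]%N)]);
      ([:: 9; 8; 8]%N, [:: (qint2 q, [:: 8; 9; 8]%N); (-1, [:: 8; 8; 9]%N); (-1, [:: 9]%N)]);
      ([:: 9; 9; 8]%N, [:: (qint2 q, [:: 9; 8; 9]%N); (-1, [:: 8; 9; 9]%N); (-1, [:: 8]%N)])].

Definition far_rules : seq (rule Cx) :=
  [:: ([:: 7; 6]%N, [:: (1, [:: 6; 7]%N)]);
      ([:: 1; 0]%N, [:: (1, [:: 0; 1]%N)]);
      ([:: 9; 8]%N, [:: (1, [:: 8; 9]%N)])].

Lemma valid_adjacent_rules (a b : 'I_n.-1) : (b.+1 == a :> nat) ->
  valid_rules R1 (coaction_gens a b) (sl_pair_rules q q^-1 ++ adjacent_rules ++ tensor_rules).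
Proof.
move=> ba; have ab : adjacent a b by rewrite /adjacent ba orbT.
have ba' : adjacent b a by rewrite adjacent_sym.
apply: valid_rules_cat; first apply: valid_sl_pair_rules => //.
- exact: sl_rel_inl.
- exact: adjacent_neq.
- exact: q_cartan_adjacent.
- exact: q_cartan_adjacent.
apply: valid_rules_cat; last exact: valid_tensor_rules.
have [Ea1 _] := serre_e sl_rel_inl ab; have [_ Eb2] := serre_e sl_rel_inl ba'.
have [Fa1 _] := serre_f sl_rel_inl ab; have [_ Fb2] := serre_f sl_rel_inl ba'.
have [Ia1 _] := so_cubic_rearrange (so_rel_inr (so_1 q ba)).
have [_ Ib2] := so_cubic_rearrange (so_rel_inr (so_2 q ba)).
rewrite /= /eval_mono /coaction_gens /sl_pair_gens /gen_of_seq /=.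
by rewrite ?eqv_mul1l ?eqv_mul1r ?eqv_addr0.
Qed.

Lemma valid_far_rules (a b : 'I_n.-1) : far a b ->
  valid_rules R1 (coaction_gens a b) (sl_pair_rules q 1 ++ far_rules ++ tensor_rules).
Proof.
move=> ab; have ba : far b a by rewrite far_sym.
apply: valid_rules_cat; first apply: valid_sl_pair_rules => //.
- exact: sl_rel_inl.
- exact: far_neq.
- exact: q_cartan_far.
- exact: q_cartan_far.
apply: valid_rules_cat; last exact: valid_tensor_rules.
have Eba := sl_rel_inl (sl_ee q ba); have Fba := sl_rel_inl (sl_ff q ba).
have Iba := so_rel_inr (so_3 q ba).
rewrite /= /eval_mono /coaction_gens /sl_pair_gens /gen_of_seq /=.
by rewrite ?eqv_mul1l ?eqv_mul1r ?eqv_addr0.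
Qed.

(* In the generators [coaction_gens a b], phi(I_a) and phi(I_b). *)
Definition phi_a : term Cx nat := tAdd (tSub (G 0) (tC q^-1 ** G 2 ** G 6)) (G 2 ** G 8).
Definition phi_b : term Cx nat := tAdd (tSub (G 1) (tC q^-1 ** G 4 ** G 7)) (G 4 ** G 9).

Lemma phi_so_rel a b : so_rel q a b -> subst (@phi q n) a ≡ subst (@phi q n) b.
Proof.
case=> [i j ij | i j ij | i j ij].
- refine (eqv_by_rewriting (gen := coaction_gens j i) (k := 12)
    (t1 := tSub (tAdd (phi_a ** phi_a ** phi_b) (phi_b ** phi_a ** phi_a))
                (tC (qint2 q) ** phi_a ** phi_b ** phi_a))
    (t2 := tOpp phi_b) (valid_adjacent_rules ij) _).
  cbv [sl_pair_rules adjacent_rules tensor_rules iota qdiff_inv phi_a phi_b]; solve_coefs.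
- refine (eqv_by_rewriting (gen := coaction_gens j i) (k := 12)
    (t1 := tSub (tAdd (phi_b ** phi_b ** phi_a) (phi_a ** phi_b ** phi_b))
                (tC (qint2 q) ** phi_b ** phi_a ** phi_b))
    (t2 := tOpp phi_a) (valid_adjacent_rules ij) _).
  cbv [sl_pair_rules adjacent_rules tensor_rules iota qdiff_inv phi_a phi_b]; solve_coefs.
- refine (eqv_by_rewriting (gen := coaction_gens i j) (k := 12)
    (t1 := phi_a ** phi_b) (t2 := phi_b ** phi_a) (valid_far_rules ij) _).
  cbv [sl_pair_rules far_rules tensor_rules iota qdiff_inv phi_a phi_b]; solve_coefs.
Qed.

End CoactionHom.

Section CoactionAxioms.
Variables (q : Cx) (n : nat).
Hypothesis q_neq0 : q != 0.

Lemma coaction_counit (t : term Cx (sogen n)) :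
  eqv (@so_rel q n) (subst (@eps_id n) (subst (@phi q n) t)) t.
Proof.
rewrite subst_comp -[X in eqv _ _ X]subst_tGen; apply: eqv_subst_ext; case=> i.
refine (eqv_by_rewriting (gen := gen_of_seq [:: tGen (gI i)]) (k := 1) (rs := [::])
  (t1 := tAdd (tSub (tC 0) (tC q^-1 ** tC 1 ** tC 0)) (tC 1 ** G 0)) (t2 := G 0) I _).
solve_coefs.
Qed.

Lemma coaction_iota (t : term Cx (sogen n)) :
  eqv (tens_rel (@sl_rel q n) (@sl_rel q n))
    (subst (@id_iota q n) (subst (@phi q n) t)) (subst (@Delta n) (subst (@iota_so q n) t)).
Proof.
rewrite !subst_comp; apply: eqv_subst_ext; case=> i.
pose gen := @gen_of_seq Cx _ [:: tGen (inl (gF i)); tGen (inl (gK i)); tGen (inl (gE i));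
  tGen (inr (gK i)); tGen (inr (gKi i)); tGen (inr (gE i)); tGen (inr (gF i))].
have rs_ok : valid_rules (tens_rel (@sl_rel q n) (@sl_rel q n)) gen
    [:: ([:: 3; 2]%N, [:: (1, [:: 2; 3]%N)]); ([:: 3; 4]%N, [:: (1, [::])])].
  rewrite /= /eval_mono /= ?eqv_mul1l ?eqv_mul1r ?eqv_addr0; split; last split=> //.
  - by symmetry; apply: eqv_rel; apply: tr_comm.
  - by apply: eqv_rel; apply: (tr_r _ (sl_kki q i)).
refine (eqv_by_rewriting (k := 5)
  (t1 := tAdd (tSub (G 0) (tC q^-1 ** G 1 ** G 2)) (G 1 ** tSub (G 6) (tC q^-1 ** G 3 ** G 5)))
  (t2 := tSub (tAdd (G 0) (G 1 ** G 6)) (tC q^-1 ** (G 1 ** G 3) ** tAdd (G 2 ** G 4) (G 5)))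
  rs_ok _).
solve_coefs.
Qed.

Lemma coaction_coassoc (t : term Cx (sogen n)) :
  eqv (tens_rel (@sl_rel q n) (tens_rel (@sl_rel q n) (@so_rel q n)))
    (subst (@Delta_id n) (subst (@phi q n) t)) (subst (@id_phi q n) (subst (@phi q n) t)).
Proof.
rewrite !subst_comp; apply: eqv_subst_ext; case=> i.
pose gen := @gen_of_seq Cx _ [:: tGen (inl (gF i)); tGen (inl (gK i)); tGen (inl (gE i));
  tGen (inr (inl (gK i))); tGen (inr (inl (gKi i))); tGen (inr (inl (gE i)));
  tGen (inr (inl (gF i))); tGen (inr (inr (gI i)))].
have rs_ok : valid_rules (tens_rel (@sl_rel q n) (tens_rel (@sl_rel q n) (@so_rel q n))) gen
    [:: ([:: 3; 2]%N, [:: (1, [:: 2; 3]%N)]); ([:: 3; 4]%N, [:: (1, [::])])].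
  rewrite /= /eval_mono /= ?eqv_mul1l ?eqv_mul1r ?eqv_addr0; split; last split=> //.
  - by symmetry; apply: eqv_rel; apply: tr_comm.
  - by apply: eqv_rel; apply: (tr_r _ (tr_l _ (sl_kki q i))).
refine (eqv_by_rewriting (k := 5)
  (t1 := tAdd (tSub (tAdd (G 0) (G 1 ** G 6))
                    (tC q^-1 ** (G 1 ** G 3) ** tAdd (G 2 ** G 4) (G 5)))
              (G 1 ** G 3 ** G 7))
  (t2 := tAdd (tSub (G 0) (tC q^-1 ** G 1 ** G 2))
              (G 1 ** tAdd (tSub (G 6) (tC q^-1 ** G 3 ** G 5)) (G 3 ** G 7)))
  rs_ok _).
solve_coefs.
Qed.

End CoactionAxioms.

Theorem proposition1 (n : nat) (q : Cx) :
  (2 <= n)%N -> q != 0 -> q != 1 -> q != -1 ->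
  (forall m : nat, (0 < m)%N -> q ^+ m != 1) ->
  [/\ (* phi extends to a unital algebra homomorphism U'_q(so_n) -> U_q(sl_n) (x) U'_q(so_n) *)
      @is_alg_hom Cx (Uso q n) (tensor (Usl q n) (Uso q n)) (@phi q n),
      (* coassociativity of the coaction: (Delta (x) id) o phi = (id (x) phi) o phi *)
      (forall a : term Cx (sogen n),
         eqv (rels (tensor (Usl q n) (tensor (Usl q n) (Uso q n))))
           (subst (@Delta_id n) (subst (@phi q n) a))
           (subst (@id_phi q n) (subst (@phi q n) a))),
      (* counit: (eps (x) id) o phi = id *)
      (forall a : term Cx (sogen n),
         eqv (rels (Uso q n)) (subst (@eps_id n) (subst (@phi q n) a)) a)
    & (* (id (x) iota_so) o phi = Delta o iota_so *)
      (forall a : term Cx (sogen n),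
         eqv (rels (tensor (Usl q n) (Usl q n)))
           (subst (@id_iota q n) (subst (@phi q n) a))
           (subst (@Delta n) (subst (@iota_so q n) a)))].
Proof.
move=> _ q_neq0 q_neq1 q_neqN1 _.
have qq_neq1 : q * q - 1 != 0.
  by rewrite -expr2 subr_sqr_1 mulf_neq0 // ?subr_eq0 // addr_eq0.
split.
- exact: eqv_subst (phi_so_rel q_neq0 qq_neq1).
- exact: coaction_coassoc.
- exact: coaction_counit.
- exact: coaction_iota.
Qed.
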